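(* In the notation of the context, for $0\le i\le D-1$ the following identities of Laurent polynomials in $\eta$ hold: $$\eta\,\ell_i^-=(\tau q^D+\tau^{-1})(q^{i-D}-1)\ell^+_{i-1}+(\tau q^D+\tau^{-1})q^{i-D}\ell^-_i+\tau(q^D-q^{i+1}+1)\ell^+_i+\tau(1-q^{i+1})\ell^-_{i+1},$$ $$\eta^{-1}\ell_i^-=\tau^{-1}(1-q^{i-D})\ell^-_{i-1}+(\tau q^D+\tau^{-1})(1-q^{i-D})\ell^+_{i-1}-\tau(q^D-q^i+1)\ell^+_i,$$ $$\eta\,\ell_i^+=\tau^{-1}(1-q^{i-D})\ell^+_{i-1}-\tau^{-1}q^{i-D}\ell^-_i,$$ $$\eta^{-1}\ell_i^+=\tau^{-1}q^{i-D+1}\ell^-_i+(\tau q^D+\tau^{-1})q^{i-D+1}\ell^+_i+\tau(1-q^{i+1})\ell^+_{i+1}.$$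
   Context: Let $q$ be a prime power, $D\ge3$ an integer, and $e\in\{0,\tfrac12,1,\tfrac32,2\}$ (with $q$ a square when $e\in\{\tfrac12,\tfrac32\}$). Let $\tau=\sqrt{-1}\,q^{-(D+e)/2}$. Write $(r;q)_n=(1-r)(1-rq)\cdots(1-rq^{n-1})$ and ${}_3\phi_2\!\left(\begin{smallmatrix}r_1,r_2,r_3\\ s_1,s_2\end{smallmatrix};q,z\right)=\sum_{n\ge0}\frac{(r_1;q)_n(r_2;q)_n(r_3;q)_n}{(s_1;q)_n(s_2;q)_n}\frac{z^n}{(q;q)_n}$. For a nonzero scalar $t$ and integers $0\le i\le d$ define the Laurent polynomial $h_i(\eta;t,d;q)=\frac{(q^{-d};q)_i}{t^i}\,{}_3\phi_2\!\left(\begin{smallmatrix}q^{-i},\,t\eta^{-1},\,t\eta\\ 0,\,q^{-d}\end{smallmatrix};q,q\right)$. Let $h_i=h_i(\eta;\tau,D;q)$ ($0\le i\le D$), $h_i^\perp=h_i(\eta;\tau q,D-2;q)$ ($0\le i\le D-2$), $h^\perp_{-1}=0$, $h^\perp_{D-1}=\eta^{1-D}\prod_{n=1}^{D-1}(\eta-\tau q^n)(\eta-\tau^{-1}q^{-n})$, and $p^\perp=\eta^{-1}(\eta-\tau)(\eta-\tau^{-1}q^{-D})$. For $0\le i\le D-1$ define $\ell_i^+=\frac{h_{i+1}-p^\perp h_i^\perp}{\tau^{i+1}(1-q^D)(q;q)_i}$ and $\ell_i^-=\frac{q^D-q^i}{\tau^i(q^D-1)(q;q)_i}\Big(h_i-\frac{1-q^i}{q^D-q^i}p^\perp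 h^\perp_{i-1}\Big)$ (the non-symmetric dual $q$-Krawtchouk polynomials). Also set $\ell^\pm_{-1}=0$, $\ell_D^+=-\frac{\eta^{-1}p^\perp h^\perp_{D-1}}{\tau^{D+1}(q;q)_D}$, $\ell_D^-=\frac{p^\perp h^\perp_{D-1}}{\tau^D(q;q)_D}$. *)

(* Laurent polynomials in etaX over algC are viewed inside the
   field of rational functions {fraction {poly algC}}, with etaX := 'X. *)
From HB Require Import structures.
From mathcomp Require Import all_boot all_order all_algebra all_field.
From mathcomp Require Import fraction.
Set Implicit Arguments. Unset Strict Implicit. Unset Printing Implicit Defensive.
Import Order.TTheory GRing.Theory Num.Theory.
Local Open Scope ring_scope.

Notation RF := {fraction {poly algC}}.

Definition cF (c : algC) : RF := FracField.tofrac (c%:P).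
Definition etaX : RF := FracField.tofrac 'X.

Definition qpoch (r qq : RF) (n : nat) : RF := \prod_(k < n) (1 - r * qq ^+ k).

Section Defs.
Variables (q : nat) (D : nat) (tau : algC).
Let Q : RF := q%:R.
Let T : RF := cF tau.

(* h_i(etaX; t, d; q), 3phi2 with numerator parameter q^{-i}: terminating sum, n = 0..i *)
Definition hpol (i : nat) (t : RF) (d : nat) : RF :=
  qpoch (Q ^- d) Q i / t ^+ i *
  \sum_(n < i.+1)
     (qpoch (Q ^- i) Q n * qpoch (t / etaX) Q n * qpoch (t * etaX) Q n)
     / (qpoch 0 Q n * qpoch (Q ^- d) Q n) * (Q ^+ n / qpoch Q Q n).

Definition hh (i : nat) : RF := hpol i T D.

Definition hperp (j : nat) : RF :=
  if j == D.-1 then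
    etaX ^- D.-1 * \prod_(1 <= n < D) ((etaX - T * Q ^+ n) * (etaX - T^-1 * Q ^- n))
  else hpol j (T * Q) (D - 2).

Definition hperp_prev (i : nat) : RF := if i is j.+1 then hperp j else 0.

Definition pperp : RF := etaX^-1 * (etaX - T) * (etaX - T^-1 * Q ^- D).

Definition lplus (i : nat) : RF :=
  if i == D then - (etaX^-1 * pperp * hperp D.-1) / (T ^+ D.+1 * qpoch Q Q D)
  else (hh i.+1 - pperp * hperp i) / (T ^+ i.+1 * (1 - Q ^+ D) * qpoch Q Q i).

Definition lminus (i : nat) : RF :=
  if i == D then pperp * hperp D.-1 / (T ^+ D * qpoch Q Q D)
  else (Q ^+ D - Q ^+ i) / (T ^+ i * (Q ^+ D - 1) * qpoch Q Q i) *
       (hh i - (1 - Q ^+ i) / (Q ^+ D - Q ^+ i) * pperp * hperp_prev i).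

Definition lplus_prev (i : nat) : RF := if i is j.+1 then lplus j else 0.
Definition lminus_prev (i : nat) : RF := if i is j.+1 then lminus j else 0.
End Defs.

(* tau = sqrt(-1) q^{-(D+e)/2}, with e2 = 2e; q^{(D+e)/2} = (q^(2D+e2))^(1/4) *)
Definition tau_of (q D e2 : nat) : algC :=
  'i / sqrtC (sqrtC ((q%:R : algC) ^+ (2 * D + e2))).

From Pilot Require Import Defs.
From mathcomp Require Import all_boot all_algebra all_field.
From mathcomp Require Import fraction.
From mathcomp.algebra_tactics Require Import ring.
From mathcomp Require Import zify.
Set Implicit Arguments. Unset Strict Implicit. Unset Printing Implicit Defensive.
Import GRing.Theory Num.Theory.
Local Open Scope ring_scope.

(* The identities hold for every nonzero tau and every q that is not a root of
   unity, and are proved as identities of rational functions over an arbitrary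
   field.  The polynomial h_j(eta; t, d) is a finite combination of the
   Askey-Wilson basis (t/eta, t eta; q)_n.  For t = tau each basis element is a
   two-term combination of the elements for t = tau q, and multiplication by
   eta + 1/eta acts on the latter by a two-term rule; comparing coefficients
   gives two contiguous relations linking h_{k+1}, h_k, h^perp_k and
   h^perp_{k-1}.  The exceptional h^perp_{D-1} is a multiple of a single basis
   element for tau q and obeys the same relations.  They express ell^+_k and ell^-_k through
   h^perp_k and h^perp_{k-1} and give a three-term recurrence for h^perp, after
   which each of the four identities is an identity of rational functions in
   q, tau and eta. *)

(* The definitions of Defs over an arbitrary field, with Q, a, u in the roles
   of q, tau, eta. *)
Section FieldDefs.
Variable F : fieldType.

Definition qpochF (r qq : F) (n : nat) : F := \prod_(k < n) (1 - r * qq ^+ k).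

Variables (Q a u : F) (D : nat).

Definition hpolF (i : nat) (t : F) (d : nat) : F :=
  qpochF (Q ^- d) Q i / t ^+ i *
  \sum_(n < i.+1)
     (qpochF (Q ^- i) Q n * qpochF (t / u) Q n * qpochF (t * u) Q n)
     / (qpochF 0 Q n * qpochF (Q ^- d) Q n) * (Q ^+ n / qpochF Q Q n).

Definition hhF (i : nat) : F := hpolF i a D.

Definition hperpF (j : nat) : F :=
  if j == D.-1 then
    u ^- D.-1 * \prod_(1 <= n < D) ((u - a * Q ^+ n) * (u - a^-1 * Q ^- n))
  else hpolF j (a * Q) (D - 2).

Definition hperp_prevF (i : nat) : F := if i is j.+1 then hperpF j else 0.

Definition pperpF : F := u^-1 * (u - a) * (u - a^-1 * Q ^- D).

Definition lplusF (i : nat) : F :=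
  if i == D then - (u^-1 * pperpF * hperpF D.-1) / (a ^+ D.+1 * qpochF Q Q D)
  else (hhF i.+1 - pperpF * hperpF i) / (a ^+ i.+1 * (1 - Q ^+ D) * qpochF Q Q i).

Definition lminusF (i : nat) : F :=
  if i == D then pperpF * hperpF D.-1 / (a ^+ D * qpochF Q Q D)
  else (Q ^+ D - Q ^+ i) / (a ^+ i * (Q ^+ D - 1) * qpochF Q Q i) *
       (hhF i - (1 - Q ^+ i) / (Q ^+ D - Q ^+ i) * pperpF * hperp_prevF i).

Definition lplus_prevF (i : nat) : F := if i is j.+1 then lplusF j else 0.
Definition lminus_prevF (i : nat) : F := if i is j.+1 then lminusF j else 0.

End FieldDefs.

(** * Pochhammer symbols *)

Section Pochhammer.
Variables (F : fieldType) (Q : F).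

Lemma qpochF0 r : qpochF r Q 0 = 1.
Proof. by rewrite /qpochF big_ord0. Qed.

Lemma qpochFS r n : qpochF r Q n.+1 = qpochF r Q n * (1 - r * Q ^+ n).
Proof. by rewrite /qpochF big_ord_recr. Qed.

Lemma qpochFSl r n : qpochF r Q n.+1 = (1 - r) * qpochF (r * Q) Q n.
Proof.
rewrite /qpochF big_ord_recl /= expr0 mulr1; congr (_ * _).
by apply: eq_bigr => k _; rewrite /bump /= exprS mulrA.
Qed.

Lemma qpochF_base0 n : qpochF 0 Q n = 1.
Proof. by rewrite /qpochF big1 // => k _; rewrite mul0r subr0. Qed.

Lemma qpochF_cat r m n : (m <= n)%N ->
  qpochF r Q n = qpochF r Q m * \prod_(m <= k < n) (1 - r * Q ^+ k).
Proof.
move=> le_mn; rewrite /qpochF -!(big_mkord xpredT (fun k => 1 - r * Q ^+ k)).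
exact: big_cat_nat.
Qed.

End Pochhammer.

Section PowersOfQ.
Variables (F : fieldType) (Q : F).
Hypotheses (Q_neq0 : Q != 0) (Q_not_unity : forall k, (0 < k)%N -> Q ^+ k != 1).

Local Notation qp r n := (qpochF r Q n).

Lemma expQ_neq0 n : Q ^+ n != 0.
Proof. exact: expf_neq0. Qed.

Lemma subr_expQ1_neq0 n : (0 < n)%N -> Q ^+ n - 1 != 0.
Proof. by move=> n_gt0; rewrite subr_eq0 Q_not_unity. Qed.

Lemma subr1_expQ_neq0 n : (0 < n)%N -> 1 - Q ^+ n != 0.
Proof. by move=> n_gt0; rewrite subr_eq0 eq_sym Q_not_unity. Qed.

Lemma subr_expQ_neq0 m n : m != n -> Q ^+ m - Q ^+ n != 0.
Proof.
wlog lt_nm : m n / (n < m)%N.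
  move=> W neq_mn; case: (ltngtP n m) => [lt_nm|lt_mn|eq_nm].
  - exact: W.
  - by rewrite -opprB oppr_eq0 W // eq_sym.
  - by rewrite eq_nm eqxx in neq_mn.
move=> _; rewrite -(subnKC (ltnW lt_nm)) exprD -{2}(mulr1 (Q ^+ n)) -mulrBr.
by rewrite mulf_neq0 ?expQ_neq0 // subr_expQ1_neq0 ?subn_gt0.
Qed.

Lemma subr1_expQN_neq0 n : 1 - Q ^- n.+1 != 0.
Proof.
rewrite subr_eq0 eq_sym; apply: contra (Q_not_unity (ltn0Sn n)) => /eqP Qn1.
by rewrite -[Q ^+ n.+1]invrK Qn1 invr1.
Qed.

Lemma subr1Q_neq0 : 1 - Q != 0.
Proof. by rewrite -[Q in 1 - Q]expr1 subr1_expQ_neq0. Qed.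

Lemma subr1_expQ_expQN_neq0 m n : m != n -> 1 - Q ^+ m * Q ^- n != 0.
Proof.
move=> neq_mn; rewrite -[1](mulfV (expQ_neq0 n)) -mulrBl mulf_neq0 ?invr_eq0 ?expQ_neq0 //.
by rewrite subr_expQ_neq0 // eq_sym.
Qed.

Lemma qpochFQ_neq0 n : qpochF Q Q n != 0.
Proof. by apply/prodf_neq0 => k _; rewrite -exprS subr1_expQ_neq0. Qed.

Lemma qpochFN_S j n : qp (Q ^- j.+1) n.+1 = (1 - Q ^- j.+1) * qp (Q ^- j) n.
Proof. by rewrite qpochFSl exprS invfM mulrAC mulVf // mul1r. Qed.

Lemma qpochFN_SV j n : qp (Q ^- j) n = qp (Q ^- j.+1) n.+1 / (1 - Q ^- j.+1).
Proof. by rewrite qpochFN_S [(1 - _) * _]mulrC mulfK ?subr1_expQN_neq0. Qed.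

Lemma qpochFN_hi j n : (j < n)%N -> qp (Q ^- j) n = 0.
Proof.
move=> lt_jn; rewrite /qpochF (bigD1 (Ordinal lt_jn)) //=.
by rewrite mulVf ?expQ_neq0 // subrr mul0r.
Qed.

Lemma qpochFN_neq0 d n : (n <= d)%N -> qp (Q ^- d) n != 0.
Proof.
move=> le_nd; apply/prodf_neq0 => -[k lt_kn] _ /=.
by rewrite mulrC subr1_expQ_expQN_neq0 //; lia.
Qed.

Lemma qpochFN_rev m : qp (Q ^- m) m = \prod_(k < m) (1 - Q ^- k.+1).
Proof.
rewrite /qpochF -(big_mkord xpredT (fun k => 1 - Q ^- m * Q ^+ k)) big_rev_mkord subn0.
apply: eq_bigr => -[k lt_km] _ /=; congr (_ - _).
have -> : Q ^- m = Q ^- (m - k.+1) * Q ^- k.+1 by rewrite -invfM -exprD subnK.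
by rewrite mulrAC mulVf ?mul1r // expQ_neq0.
Qed.

End PowersOfQ.

Ltac neq0 :=
  repeat (apply/andP; split); rewrite -?exprS;
  first [ done
        | exact: oner_neq0
        | by apply: expf_neq0
        | by apply: expf_neq0; apply: mulf_neq0
        | by apply: qpochFQ_neq0
        | by apply: subr1_expQN_neq0
        | by apply: subr1Q_neq0
        | (apply: subr1_expQ_neq0 => //; lia)
        | (apply: subr_expQ1_neq0 => //; lia)
        | (apply: subr_expQ_neq0 => //; lia)
        | (apply: subr1_expQ_expQN_neq0 => //; lia) ].

(** * Askey-Wilson expansions and contiguous relations *)

Section Contiguity.
Variables (F : fieldType) (Q a u : F) (D : nat).
Hypotheses (Q_neq0 : Q != 0) (Q_not_unity : forall k, (0 < k)%N -> Q ^+ k != 1).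
Hypotheses (a_neq0 : a != 0) (u_neq0 : u != 0).

Local Notation qp r n := (qpochF r Q n).
Local Notation z := (Q ^- D).
Local Notation x := (u + u^-1).

Definition aw_basis (t : F) (n : nat) : F := qp (t / u) n * qp (t * u) n.

Local Notation P := (aw_basis a).
Local Notation W := (aw_basis (a * Q)).

Lemma aw_basis0 t : aw_basis t 0 = 1.
Proof. by rewrite /aw_basis !qpochF0 mulr1. Qed.

Lemma aw_basisS_rescale n :
  P n.+1 = (1 - Q ^- n.+1) * (1 - a ^+ 2 * Q ^+ n.+1) * W n + Q ^- n.+1 * W n.+1.
Proof.
rewrite /aw_basis (qpochFSl _ (a / u)) (qpochFSl _ (a * u)).
rewrite (qpochFS _ (a * Q / u)) (qpochFS _ (a * Q * u)).
rewrite [a / u * Q]mulrAC [a * u * Q]mulrAC.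
move: (qp (a * Q / u) n) (qp (a * Q * u) n) => A B.
rewrite !exprS; field; neq0.
Qed.

Lemma mulx_aw_basis n :
  x * W n = (1 + a ^+ 2 * Q ^+ n.+1 ^+ 2) / (a * Q ^+ n.+1) * W n - W n.+1 / (a * Q ^+ n.+1).
Proof.
rewrite /aw_basis !qpochFS.
move: (qp (a * Q / u) n) (qp (a * Q * u) n) => A B.
rewrite !exprS; field; neq0.
Qed.

Definition rescale_coef (c : nat -> F) (n : nat) : F :=
  c n.+1 * ((1 - Q ^- n.+1) * (1 - a ^+ 2 * Q ^+ n.+1)) + c n * Q ^- n.

Definition mulx_coef (c : nat -> F) (n : nat) : F :=
  c n * ((1 + a ^+ 2 * Q ^+ n.+1 ^+ 2) / (a * Q ^+ n.+1))
  - (if n is m.+1 then c m / (a * Q ^+ n) else 0).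

Lemma sum_aw_basis_rescale (c : nat -> F) N :
  \sum_(n < N.+1) c n * P n =
  \sum_(n < N) rescale_coef c n * W n + c N * Q ^- N * W N.
Proof.
elim: N => [|N IH].
  by rewrite big_ord1 big_ord0 !aw_basis0 expr0 invr1 !mulr1 add0r.
rewrite big_ord_recr /= IH big_ord_recr /= aw_basisS_rescale /rescale_coef.
by rewrite -!addrA; congr (_ + _); ring.
Qed.

Lemma mulx_sum_aw_basis (c : nat -> F) N :
  x * \sum_(n < N.+1) c n * W n =
  \sum_(n < N.+1) mulx_coef c n * W n - c N / (a * Q ^+ N.+1) * W N.+1.
Proof.
elim: N => [|N IH].
  by rewrite !big_ord1 /mulx_coef /= mulrCA mulx_aw_basis; ring.
rewrite big_ord_recr /= mulrDr IH [in RHS]big_ord_recr /=.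
by rewrite [x * (_ * W _)]mulrCA mulx_aw_basis /mulx_coef; ring.
Qed.

(* [hpol_coef t d j n] is the coefficient of [aw_basis t n] in [hpolF j t d].
   The ratio (Q^-d; Q)_j / (Q^-d; Q)_n is kept as the product [zprod d j n]
   because (Q^-d; Q)_n vanishes for n > d. *)
Definition zprod (d j n : nat) : F := \prod_(n <= k < j) (1 - Q ^- d * Q ^+ k).

Lemma zprod_geq d j n : (j <= n)%N -> zprod d j n = 1.
Proof. by move=> le_jn; rewrite /zprod big_geq. Qed.

Lemma zprod_recl d j n : (n < j)%N -> zprod d j n = (1 - Q ^- d * Q ^+ n) * zprod d j n.+1.
Proof. by move=> lt_nj; rewrite /zprod big_ltn. Qed.

Lemma zprod_recr d j n : (n <= j)%N -> zprod d j.+1 n = zprod d j n * (1 - Q ^- d * Q ^+ j).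
Proof. by move=> le_nj; rewrite /zprod big_nat_recr. Qed.

Lemma zprod_eq0 d j n : (n <= d < j)%N -> zprod d j n = 0.
Proof.
case/andP=> le_nd lt_dj; rewrite /zprod (big_cat_nat le_nd (ltnW lt_dj)) /= (big_ltn lt_dj).
by rewrite mulVf ?expQ_neq0 // subrr mul0r mulr0.
Qed.

Lemma zprod_subn2 d j n : (2 <= d)%N -> zprod (d - 2) j n = zprod d j.+2 n.+2.
Proof.
move=> d_ge2; rewrite /zprod -(addn2 n) -(addn2 j) big_addn addnK.
have Qd2 : Q ^- (d - 2) = Q ^- d * Q ^+ 2.
  by rewrite (exprB d_ge2) ?unitfE // invf_div mulrC.
by apply: eq_bigr => k _; rewrite Qd2 exprD; congr (_ - _); ring.
Qed.

Definition hpol_coef (t : F) (d j n : nat) : F :=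
  t ^- j * Q ^+ n * qp (Q ^- j) n / qp Q n * zprod d j n.

Lemma hpol_coef_hi t d j n : (j < n)%N -> hpol_coef t d j n = 0.
Proof. by move=> lt_jn; rewrite /hpol_coef qpochFN_hi // !(mulr0, mul0r). Qed.

Lemma hpolF_expansion t d j N : t != 0 -> (j <= d)%N -> (j < N)%N ->
  hpolF Q u j t d = \sum_(n < N) hpol_coef t d j n * aw_basis t n.
Proof.
move=> t_neq0 le_jd lt_jN; rewrite /hpolF mulr_sumr.
rewrite [RHS](bigID (fun n : 'I_N => (n < j.+1)%N)) /= [X in _ + X]big1 ?addr0; last first.
  by move=> [n lt_nN] /= le_jn; rewrite hpol_coef_hi ?mul0r //; lia.
rewrite -(big_ord_widen N (fun n => hpol_coef t d j n * aw_basis t n)) //.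
apply: eq_bigr => -[n lt_nj] _ /=.
have le_nj : (n <= j)%N by lia.
rewrite /hpol_coef /aw_basis qpochF_base0 (qpochF_cat _ _ le_nj) -/(zprod d j n).
have := qpochFN_neq0 Q_neq0 Q_not_unity (leq_trans le_nj le_jd).
move: (qp (Q ^- d) n) => A A_neq0.
by field; rewrite A_neq0 /=; neq0.
Qed.

Lemma prod_eq_aw_basis m :
  u ^- m * \prod_(1 <= n < m.+1) ((u - a * Q ^+ n) * (u - a^-1 * Q ^- n))
  = (a * Q) ^- m * Q ^+ m * qp (Q ^- m) m / qp Q m * W m.
Proof.
elim: m => [|m IH].
  by rewrite big_geq // !expr0 !invr1 !qpochF0 aw_basis0 !mulr1 divr1.
rewrite (qpochFN_rev Q_neq0) in IH.
rewrite (qpochFN_rev Q_neq0) big_ord_recr /= big_nat_recr //=.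
move: IH; set A := \prod_(1 <= n < m.+1) _; set V := \prod_(k < m) _ => IH.
have -> : A = (a * Q) ^- m * Q ^+ m * V / qp Q m * W m * u ^+ m.
  by rewrite -IH mulrAC mulVf ?mul1r // expf_neq0.
rewrite /aw_basis !qpochFS.
have := qpochFQ_neq0 Q_not_unity m; move: (qp Q m) => B B_neq0.
move: (qp (a * Q / u) m) (qp (a * Q * u) m) => C E.
by rewrite !exprS ?exprMn; field; neq0.
Qed.

Hypothesis D_ge2 : (2 <= D)%N.

Local Notation hh_coef := (hpol_coef a D).
Local Notation hperp_coef := (hpol_coef (a * Q) (D - 2)).

Definition hperp_prev_coef (j n : nat) : F := if j is j'.+1 then hperp_coef j' n else 0.

Lemma hhS_coef_contiguous i n :
  rescale_coef (hh_coef i.+1) n =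
  mulx_coef (hperp_coef i) n - (a + z / a) * hperp_coef i n
  - (1 - Q ^+ i) * (1 - z) * hperp_prev_coef i n.
Proof.
rewrite /rescale_coef /mulx_coef /hperp_prev_coef.
(* The cases are the positions of n relative to i at which Pochhammer or [zprod]
   factors are empty or vanish. *)
have [lt_in|le_ni] := ltnP i.+1 n.
  case: n lt_in => [|m] lt_im //.
  rewrite !hpol_coef_hi; try lia.
  case: i lt_im => [|i'] lt_im; rewrite ?hpol_coef_hi; try lia;
    by rewrite ?(mul0r, mulr0, add0r, addr0, subr0, sub0r, oppr0).
have [->|ne_ni1] := eqVneq n i.+1.
  rewrite (@hpol_coef_hi _ _ i.+1 i.+2) // (@hpol_coef_hi _ _ i i.+1) //.
  have -> : (if i is i'.+1 then hperp_coef i' i.+1 else 0) = 0.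
    by case: (i) => // i'; rewrite hpol_coef_hi.
  rewrite /hpol_coef !zprod_subn2 // !zprod_geq // (qpochFN_S Q_neq0) !qpochFS.
  by rewrite !exprS ?exprMn; field; neq0.
have [->|ne_ni] := eqVneq n i.
  case: i le_ni ne_ni1 => [|i'] _ _.
    rewrite /hpol_coef !zprod_subn2 // !qpochFS !qpochF0 (@zprod_recl D 1 0) // !zprod_geq //.
    by rewrite !exprS ?exprMn !expr0; field; neq0.
  rewrite (@hpol_coef_hi _ _ i' i'.+1) //.
  rewrite /hpol_coef !zprod_subn2 //.
  rewrite (@zprod_recl D i'.+2 i'.+1) // (@zprod_recl D i'.+3 i'.+2) //.
  rewrite !zprod_geq // !(qpochFN_S Q_neq0 i'.+1) !qpochFS.
  by rewrite !exprS ?exprMn; field; neq0.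
have {le_ni ne_ni1 ne_ni} lt_ni : (n < i)%N by lia.
case: i lt_ni => [|i'] lt_ni //.
case: n lt_ni => [|m] lt_mi.
  rewrite /hpol_coef !zprod_subn2 // !qpochFS !qpochF0 (@zprod_recl D i'.+2 0) //.
  rewrite (@zprod_recl D i'.+2 1) // (@zprod_recr D i'.+2 2) //.
  by rewrite !exprS ?exprMn !expr0; field; neq0.
rewrite /hpol_coef !zprod_subn2 // (@zprod_recr D i'.+2 m.+3); last lia.
rewrite (@zprod_recr D i'.+2 m.+2); last lia.
rewrite (@zprod_recl D i'.+2 m.+1); last lia.
rewrite (@zprod_recl D i'.+2 m.+2); last lia.
rewrite !(qpochFN_S Q_neq0 i'.+1) (qpochFN_SV Q_neq0 Q_not_unity i') !qpochFS.
by rewrite !exprS ?exprMn; field; neq0.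
Qed.

Lemma hperp_coef_contiguous i n :
  (1 - z) * hperp_coef i n =
  (1 - Q ^+ i * z) * rescale_coef (hh_coef i) n
  - (1 - Q ^+ i) * (z * mulx_coef (hperp_prev_coef i) n - (a + z / a) * hperp_prev_coef i n).
Proof.
rewrite /rescale_coef /mulx_coef /hperp_prev_coef.
have [lt_in|le_ni] := ltnP i n.
  rewrite !hpol_coef_hi; try lia.
  case: i lt_in => [|i'] lt_in.
    by case: n lt_in => [|m] _; rewrite ?(mul0r, mulr0, add0r, addr0, subr0, sub0r, oppr0).
  case: n lt_in => [|m] lt_im //.
  rewrite !hpol_coef_hi; try lia.
  by rewrite ?(mul0r, mulr0, add0r, addr0, subr0, sub0r, oppr0).
case: i le_ni => [|i'] le_ni.
  have -> : n = 0%N by lia.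
  rewrite (@hpol_coef_hi _ _ 0 1) // /hpol_coef !zprod_subn2 //.
  rewrite ?qpochFS ?qpochF0 !zprod_geq //.
  by rewrite !expr0; field; neq0.
have [->|ne_ni] := eqVneq n i'.+1.
  rewrite (@hpol_coef_hi _ _ i'.+1 i'.+2) // (@hpol_coef_hi _ _ i' i'.+1) //.
  rewrite /hpol_coef !zprod_subn2 // !zprod_geq // !(qpochFN_S Q_neq0 i') ?qpochFS.
  by rewrite !exprS ?exprMn; field; neq0.
have [->|ne_ni'] := eqVneq n i'.
  case: i' le_ni ne_ni => [|j] _ _.
    rewrite /hpol_coef !zprod_subn2 // ?qpochFS ?qpochF0.
    rewrite (@zprod_recl D 3 2) // (@zprod_recl D 1 0) //.
    by rewrite !zprod_geq // !exprS ?exprMn !expr0; field; neq0.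
  rewrite /hpol_coef !zprod_subn2 // (@zprod_recl D j.+4 j.+3) // (@zprod_recl D j.+2 j.+1) //.
  rewrite (@zprod_recl D j.+3 j.+2) // !zprod_geq // !(qpochFN_S Q_neq0 j.+1) ?qpochFS.
  by rewrite !exprS ?exprMn; field; neq0.
have {le_ni ne_ni ne_ni'} lt_ni : (n < i')%N by lia.
case: i' lt_ni => [|i'] lt_ni //.
case: n lt_ni => [|m] lt_mi.
  rewrite /hpol_coef !zprod_subn2 // ?qpochFS ?qpochF0.
  rewrite (@zprod_recr D i'.+3 2) // (@zprod_recr D i'.+2 2) //.
  rewrite (@zprod_recl D i'.+2 0) // (@zprod_recl D i'.+2 1) //.
  by rewrite !exprS ?exprMn !expr0; field; neq0.
rewrite /hpol_coef !zprod_subn2 // (@zprod_recr D i'.+3 m.+3); last lia.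
rewrite (@zprod_recr D i'.+2 m.+3); last lia.
rewrite (@zprod_recr D i'.+2 m.+2); last lia.
rewrite (@zprod_recl D i'.+2 m.+1); last lia.
rewrite (@zprod_recl D i'.+2 m.+2); last lia.
rewrite !(qpochFN_S Q_neq0 i'.+1) ?qpochFS.
by rewrite !exprS ?exprMn; field; neq0.
Qed.

(* The product defining h^perp_{D-1} is a multiple of a single basis element;
   the other coefficients vanish through the factor 1 - Q^-(D-2) Q^(D-2) of
   [zprod]. *)
Lemma hperp_expansion_top N : (D.-1 < N)%N ->
  hperpF Q a u D D.-1 = \sum_(n < N) hperp_coef D.-1 n * W n.
Proof.
move=> lt_DN; rewrite /hperpF eqxx (bigD1 (Ordinal lt_DN)) //= [X in _ + X]big1 ?addr0.
  by rewrite -{1 2}(ltn_predK D_ge2) prod_eq_aw_basis /hpol_coef zprod_geq // mulr1.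
move=> [k lt_kN] /= ne_kD; have {}ne_kD : k != D.-1.
  by apply: contra ne_kD => /eqP eq_kD; apply/eqP/val_inj.
case: (ltngtP k D.-1) => [lt_kD|lt_Dk|eq_kD]; last by rewrite eq_kD eqxx in ne_kD.
- by rewrite /hpol_coef zprod_eq0 ?mulr0 ?mul0r //; lia.
- by rewrite hpol_coef_hi ?mul0r.
Qed.

Lemma hperp_expansion j N : (j <= D.-1)%N -> (j < N)%N ->
  hperpF Q a u D j = \sum_(n < N) hperp_coef j n * W n.
Proof.
move=> le_jD lt_jN; have [eq_jD|ne_jD] := eqVneq j D.-1.
  by rewrite eq_jD in lt_jN *; apply: hperp_expansion_top.
by rewrite /hperpF ifN_eq // (hpolF_expansion (N := N)) ?mulf_neq0 //; lia.
Qed.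

Lemma hperp_prev_expansion k N : (k <= D)%N -> (k < N)%N ->
  hperp_prevF Q a u D k = \sum_(n < N) hperp_prev_coef k n * W n.
Proof.
case: k => [|k] le_kD lt_kN /=; first by rewrite big1 // => n _; rewrite mul0r.
by apply: hperp_expansion; lia.
Qed.

Lemma hhS_contiguous k : (k <= D.-1)%N ->
  hhF Q a u D k.+1 =
  (x - a - z / a) * hperpF Q a u D k - (1 - Q ^+ k) * (1 - z) * hperp_prevF Q a u D k.
Proof.
move=> le_kD.
rewrite /hhF (hpolF_expansion (j := k.+1) (N := D.+3)) //; try lia.
rewrite sum_aw_basis_rescale (@hpol_coef_hi _ _ k.+1 D.+2) ?mul0r ?addr0; last lia.
rewrite (@hperp_expansion k D.+2); try lia.
rewrite (@hperp_prev_expansion k D.+2); try lia.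
set S := \sum_(n < D.+2) hperp_coef k n * W n.
have -> : (x - a - z / a) * S = x * S - (a + z / a) * S by ring.
rewrite /S mulx_sum_aw_basis (@hpol_coef_hi _ _ k D.+1) ?mul0r ?subr0; last lia.
rewrite !mulr_sumr -!sumrB; apply: eq_bigr => n _.
by rewrite hhS_coef_contiguous; ring.
Qed.

Lemma hperp_contiguous k : (k <= D.-1)%N ->
  (1 - z) * hperpF Q a u D k =
  (1 - Q ^+ k * z) * hhF Q a u D k
  - (1 - Q ^+ k) * (z * x - a - z / a) * hperp_prevF Q a u D k.
Proof.
move=> le_kD.
rewrite /hhF (hpolF_expansion (j := k) (N := D.+3)) //; try lia.
rewrite sum_aw_basis_rescale (@hpol_coef_hi _ _ k D.+2) ?mul0r ?addr0; last lia.
rewrite (@hperp_expansion k D.+2); try lia.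
rewrite (@hperp_prev_expansion k D.+2); try lia.
set S := \sum_(n < D.+2) hperp_prev_coef k n * W n.
have -> : (1 - Q ^+ k) * (z * x - a - z / a) * S =
          (1 - Q ^+ k) * (z * (x * S) - (a + z / a) * S) by ring.
rewrite /S mulx_sum_aw_basis.
have -> : hperp_prev_coef k D.+1 = 0.
  by case: (k) le_kD => [|k'] le_kD //; rewrite /hperp_prev_coef hpol_coef_hi //; lia.
rewrite !mul0r subr0 !mulr_sumr -!sumrB !mulr_sumr -!sumrB; apply: eq_bigr => n _.
by rewrite [LHS]mulrA hperp_coef_contiguous; ring.
Qed.

End Contiguity.

(** * The action of eta and 1/eta on ell^+ and ell^- *)

Section EllRelations.
Variables (F : fieldType) (Q a u : F) (D : nat).
Hypotheses (Q_neq0 : Q != 0) (Q_not_unity : forall k, (0 < k)%N -> Q ^+ k != 1).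
Hypotheses (a_neq0 : a != 0) (u_neq0 : u != 0).
Hypothesis D_ge3 : (3 <= D)%N.

Local Notation z := (Q ^- D).
Local Notation x := (u + u^-1).
Local Notation hperp := (hperpF Q a u D).
Local Notation hperp_prev := (hperp_prevF Q a u D).
Local Notation lplus := (lplusF Q a u D).
Local Notation lminus := (lminusF Q a u D).

Let D_ge2 : (2 <= D)%N. Proof. exact: ltnW. Qed.

Lemma lplus_hperp k : (k < D)%N ->
  lplus k = - z * (u^-1 * hperp k - (1 - Q ^+ k) * hperp_prev k) / (a ^+ k.+1 * qpochF Q Q k).
Proof.
move=> lt_kD; rewrite /lplusF ifN_eq; last by lia.
rewrite hhS_contiguous //; last by lia.
by rewrite /pperpF; field; neq0.
Qed.

Lemma lminus_hperp k : (k < D)%N ->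
  lminus k =
  (hperp k + (1 - Q ^+ k) * (z / u - a - z / a) * hperp_prev k) / (a ^+ k * qpochF Q Q k).
Proof.
move=> lt_kD; have zQk_neq0 : 1 - Q ^+ k * z != 0 by apply: subr1_expQ_expQN_neq0 => //; lia.
have hh_k : hhF Q a u D k =
    ((1 - z) * hperp k + (1 - Q ^+ k) * (z * x - a - z / a) * hperp_prev k) / (1 - Q ^+ k * z).
  by rewrite hperp_contiguous //; [field; neq0 | lia].
rewrite /lminusF ifN_eq; last by lia.
by rewrite hh_k /pperpF; field; neq0.
Qed.

Lemma hperp_rec k : (k.+1 < D)%N ->
  hperp k.+1 = (x - (a + z / a) * Q ^+ k.+1) * hperp k
               - (1 - Q ^+ k.+1 * z) * (1 - Q ^+ k) * hperp_prev k.
Proof.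
move=> lt_kD; have z_neq1 : 1 - z != 0 by rewrite -(ltn_predK D_ge3) subr1_expQN_neq0.
apply: (mulfI z_neq1).
rewrite hperp_contiguous //= ?hhS_contiguous //; try lia.
by field; neq0.
Qed.

Lemma lplus_top k : k = D ->
  lplus k = - (u^-1 * pperpF Q a u D * hperp D.-1) / (a ^+ D.+1 * qpochF Q Q D).
Proof. by move=> ->; rewrite /lplusF eqxx. Qed.

Lemma lminus_top k : k = D ->
  lminus k = pperpF Q a u D * hperp D.-1 / (a ^+ D * qpochF Q Q D).
Proof. by move=> ->; rewrite /lminusF eqxx. Qed.

Lemma expQN_subn k : (k <= D)%N -> Q ^- (D - k) = Q ^+ k * z.
Proof. by move=> le_kD; rewrite exprB ?unitfE // invf_div. Qed.

Definition ell_relations (i : nat) : Prop :=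
  [/\ u * lminus i =
        (a * Q ^+ D + a^-1) * (Q ^- (D - i) - 1) * lplus_prevF Q a u D i
        + (a * Q ^+ D + a^-1) * Q ^- (D - i) * lminus i
        + a * (Q ^+ D - Q ^+ i.+1 + 1) * lplus i
        + a * (1 - Q ^+ i.+1) * lminus i.+1,
      u^-1 * lminus i =
        a^-1 * (1 - Q ^- (D - i)) * lminus_prevF Q a u D i
        + (a * Q ^+ D + a^-1) * (1 - Q ^- (D - i)) * lplus_prevF Q a u D i
        - a * (Q ^+ D - Q ^+ i + 1) * lplus i,
      u * lplus i =
        a^-1 * (1 - Q ^- (D - i)) * lplus_prevF Q a u D i
        - a^-1 * Q ^- (D - i) * lminus i
    & u^-1 * lplus i =
        a^-1 * Q ^- (D - i.+1) * lminus i
        + (a * Q ^+ D + a^-1) * Q ^- (D - i.+1) * lplus i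
        + a * (1 - Q ^+ i.+1) * lplus i.+1].

Lemma ell_relations0 : ell_relations 0.
Proof.
rewrite /ell_relations /lplus_prevF /lminus_prevF !expQN_subn //; try lia.
rewrite !lplus_hperp ?lminus_hperp //; try lia.
rewrite /= (hperp_rec (k := 0)); last by lia.
by rewrite /= !qpochFS !qpochF0 !expr0; split; field; neq0.
Qed.

Lemma ell_relations_mid j : (j.+2 < D)%N -> ell_relations j.+1.
Proof.
move=> lt_jD; rewrite /ell_relations /lplus_prevF /lminus_prevF !expQN_subn; try lia.
rewrite !lplus_hperp ?lminus_hperp; try lia.
rewrite /= (hperp_rec (k := j.+1)) /=; last by lia.
rewrite (hperp_rec (k := j)); last by lia.
by rewrite !qpochFS !exprS; split; field; neq0.
Qed.

Lemma ell_relations_last j : j.+3 = D -> ell_relations j.+2.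
Proof.
move=> eq_jD; rewrite /ell_relations /lplus_prevF /lminus_prevF !expQN_subn; try lia.
rewrite (lplus_top eq_jD) (lminus_top eq_jD) (_ : D.-1 = j.+2); last by lia.
rewrite !lplus_hperp ?lminus_hperp; try lia.
rewrite /= (hperp_rec (k := j.+1)) /=; last by lia.
by rewrite /pperpF -eq_jD !qpochFS !exprS; split; field; neq0.
Qed.

Lemma ell_relations_le i : (i <= D.-1)%N -> ell_relations i.
Proof.
case: i => [|i] le_iD; first exact: ell_relations0.
have [lt_iD|ge_iD] := ltnP i.+2 D; first exact: ell_relations_mid.
case: i le_iD ge_iD => [|j] le_jD ge_jD; first by lia.
by apply: ell_relations_last; lia.
Qed.

End EllRelations.

(** * Laurent polynomials over algC *)

Section Instance.
Variables (q D : nat) (tau : algC).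
Local Notation Q := (q%:R : RF).

Lemma qpochE (r qq : RF) n : qpoch r qq n = qpochF r qq n.
Proof. by rewrite /qpoch /qpochF. Qed.

Lemma hhE i : hh q D tau i = hhF Q (cF tau) etaX D i.
Proof. by rewrite /hh /hhF /hpol /hpolF !qpochE. Qed.

Lemma hperpE j : hperp q D tau j = hperpF Q (cF tau) etaX D j.
Proof. by rewrite /hperp /hperpF /hpol /hpolF !qpochE. Qed.

Lemma hperp_prevE j : hperp_prev q D tau j = hperp_prevF Q (cF tau) etaX D j.
Proof. by case: j => [|j]; [reflexivity | exact: hperpE]. Qed.

Lemma pperpE : pperp q D tau = pperpF Q (cF tau) etaX D.
Proof. by rewrite /pperp /pperpF. Qed.

Lemma lplusE i : lplus q D tau i = lplusF Q (cF tau) etaX D i.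
Proof. by rewrite /lplus /lplusF !qpochE !hhE !hperpE !pperpE. Qed.

Lemma lminusE i : lminus q D tau i = lminusF Q (cF tau) etaX D i.
Proof. by rewrite /lminus /lminusF !qpochE !hhE !hperp_prevE !hperpE !pperpE. Qed.

Lemma lplus_prevE i : lplus_prev q D tau i = lplus_prevF Q (cF tau) etaX D i.
Proof. by case: i => [|i]; [reflexivity | exact: lplusE]. Qed.

Lemma lminus_prevE i : lminus_prev q D tau i = lminus_prevF Q (cF tau) etaX D i.
Proof. by case: i => [|i]; [reflexivity | exact: lminusE]. Qed.
End Instance.

Lemma natRF_inj : injective (fun n : nat => (n%:R : RF)).
Proof.
move=> m n /= eq_mn; apply/eqP; rewrite -(eqr_nat algC) -(inj_eq polyC_inj) !polyC_natr.
by rewrite -tofrac_eq !rmorph_nat eq_mn.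
Qed.

Lemma natRF_neq0 q : (0 < q)%N -> (q%:R : RF) != 0.
Proof. by move=> q_gt0; apply/eqP => /(@natRF_inj q 0); lia. Qed.

Lemma natRF_not_unity q : (1 < q)%N -> forall k, (0 < k)%N -> (q%:R : RF) ^+ k != 1.
Proof.
move=> q_gt1 k k_gt0; rewrite -natrX -[1]/(1%:R); apply/eqP => /natRF_inj /eqP.
by rewrite -[X in _ == X](expn0 q) eqn_exp2l // gtn_eqF.
Qed.

Lemma tau_of_neq0 q D e2 : (0 < q)%N -> tau_of q D e2 != 0.
Proof.
move=> q_gt0; rewrite /tau_of mulf_neq0 ?neq0Ci // invr_eq0 !sqrtC_eq0 expf_neq0 //.
by rewrite pnatr_eq0 -lt0n.
Qed.

Lemma cF_neq0 c : c != 0 -> cF c != 0.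
Proof. by rewrite /cF tofrac_eq0 polyC_eq0. Qed.

Lemma etaX_neq0 : etaX != 0.
Proof. by rewrite /etaX tofrac_eq0 polyX_eq0. Qed.

Theorem theorem9p5 (q D e2 : nat) (p k : nat) :
  prime p -> (0 < k)%N -> q = (p ^ k)%N ->
  (3 <= D)%N ->
  (e2 <= 4)%N -> (odd e2 -> exists r : nat, q = (r ^ 2)%N) ->
  let tau := tau_of q D e2 in
  let T : RF := cF tau in
  let Q : RF := q%:R in
  forall i : nat, (i <= D.-1)%N ->
  [/\ etaX * lminus q D tau i =
        (T * Q ^+ D + T^-1) * (Q ^- (D - i) - 1) * lplus_prev q D tau i
        + (T * Q ^+ D + T^-1) * Q ^- (D - i) * lminus q D tau i
        + T * (Q ^+ D - Q ^+ i.+1 + 1) * lplus q D tau i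
        + T * (1 - Q ^+ i.+1) * lminus q D tau i.+1,
      etaX^-1 * lminus q D tau i =
        T^-1 * (1 - Q ^- (D - i)) * lminus_prev q D tau i
        + (T * Q ^+ D + T^-1) * (1 - Q ^- (D - i)) * lplus_prev q D tau i
        - T * (Q ^+ D - Q ^+ i + 1) * lplus q D tau i,
      etaX * lplus q D tau i =
        T^-1 * (1 - Q ^- (D - i)) * lplus_prev q D tau i
        - T^-1 * Q ^- (D - i) * lminus q D tau i
    & etaX^-1 * lplus q D tau i =
        T^-1 * Q ^- (D - i.+1) * lminus q D tau i
        + (T * Q ^+ D + T^-1) * Q ^- (D - i.+1) * lplus q D tau i
        + T * (1 - Q ^+ i.+1) * lplus q D tau i.+1].
Proof.
move=> p_prime k_gt0 q_pk D_ge3 _ _ tau T Q i le_iD.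
have q_gt1 : (1 < q)%N.
  by rewrite q_pk -(expn0 p) ltn_exp2l ?prime_gt1.
have := ell_relations_le (natRF_neq0 (ltnW q_gt1)) (natRF_not_unity q_gt1)
  (cF_neq0 (tau_of_neq0 D e2 (ltnW q_gt1))) etaX_neq0 D_ge3 le_iD.
by rewrite /T /Q !lplusE !lminusE lplus_prevE lminus_prevE.
Qed.
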